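(* Suppose $\mathbb{F}$ has characteristic $2$. Let $G_0\subseteq \mathrm{SL}(V)$ be a subgroup whose order $|G_0|$ is even. Then $\mathcal{Q}_{G_0\rtimes V}(\Omega)=\emptyset$, i.e. there is no $(G_0\rtimes V)$-covariant quadrature system for $(\Omega,V)$. Equivalently, there is no $G_0$-invariant Weyl multiplier $m$ for $(V,S)$, whatever the symplectic form $S$.
   Context: $\mathbb{F}$ is a finite field with $|\mathbb{F}|=2^n$, and $\mathrm{Tr}:\mathbb{F}\to\mathbb{Z}_2$, $\mathrm{Tr}\,\alpha=\sum_{k=0}^{n-1}\alpha^{2^k}$, is its trace. $V$ is a $2$-dimensional $\mathbb{F}$-vector space, and $\Omega$ is a set on which the additive group $V$ acts freely and transitively, written $x\mapsto x+\mathbf{v}$. A direction is a $1$-dimensional subspace $D\subset V$. A line is a set $x+D=\{x+\mathbf{d}:\mathbf{d}\in D\}$; $\mathrm{Aff}(\Omega)$ is the set of all lines and $\mathrm{Aff}_D(\Omega)$ the set of lines parallel to $D$. A quadrature system on an $|\mathbb{F}|$-dimensional Hilbert space $\mathcal{H}$ is a map $\mathsf{Q}$ from $\mathrm{Aff}(\Omega)$ to operators on $\mathcal{H}$ such that: (i) each $\mathsf{Q}(\mathfrak{l})$ is a rank-one orthogonal projection; (ii) $\sum_{\mathfrak{l}\in\mathrm{Aff}_D(\Omega)}\mathsf{Q}(\mathfrak{l})=I$ for every direction $D$; (iii) $\mathrm{tr}(\mathsf{Q}(\mathfrak{l}_1)\mathsf{Q}(\mathfrak{l}_2))=1/|\mathbb{F}|$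 whenever $\mathfrak{l}_1,\mathfrak{l}_2$ are parallel to different directions. Fix an origin $o\in\Omega$ and write $x=o+\mathbf{u}_{o,x}$. The affine group $\mathrm{GL}(V)\rtimes V$ acts on $\Omega$ by $(A,\mathbf{v})\cdot x=o+A(\mathbf{u}_{o,x}+\mathbf{v})$, and on lines by $(A,\mathbf{v})\cdot(x+D)=(A,\mathbf{v})\cdot x+AD$. For a subgroup $G\subseteq\mathrm{GL}(V)\rtimes V$, a quadrature system $\mathsf{Q}$ is $G$-covariant if there is a projective unitary representation $U$ of $G$ on $\mathcal{H}$ with $\mathsf{Q}(g\cdot\mathfrak{l})=U(g)\mathsf{Q}(\mathfrak{l})U(g)^*$ for all lines $\mathfrak{l}$ and all $g\in G$. $\mathcal{Q}_G(\Omega)$ denotes the set of $G$-covariant quadrature systems, and $V$ is identified with the subgroup of translations $\{(I,\mathbf{v})\}$. A symplectic form on $V$ is a nonzero $\mathbb{F}$-bilinear $S:V\times V\to\mathbb{F}$ with $S(\mathbf{v},\mathbf{v})=0$ for all $\mathbf{v}$. A Weyl multiplier for $(V,S)$ is a function $m:V\times V\to\{z\in\mathbb{C}:|z|=1\}$ with the following properties: - the cocycle identity $m(\mathbf{u}+\mathbf{v},\mathbf{w})m(\mathbf{u},\mathbf{v})=m(\mathbf{u},\mathbf{v}+\mathbf{w})m(\mathbf{v},\mathbf{w})$ holds; - (M.1) $m(\mathbf{d}_1,\mathbf{d}_2)=1$ whenever $\mathbf{d}_1,\mathbf{d}_2$ lie in a common direction; - (M.2) $\overline{m(\mathbf{u},\mathbf{v})}\,m(\mathbf{v},\mathbf{u})=(-1)^{\mathrm{Tr}\,S(\mathbf{u},\mathbf{v})}$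 for all $\mathbf{u},\mathbf{v}$. $m$ is $G_0$-invariant if $m(A\mathbf{u},A\mathbf{v})=m(\mathbf{u},\mathbf{v})$ for all $A\in G_0$ and all $\mathbf{u},\mathbf{v}\in V$. For $G_0\subseteq \mathrm{SL}(V)$, a $V$-covariant quadrature system is $(G_0\rtimes V)$-covariant if and only if its associated Weyl multiplier is $G_0$-invariant. *)

From HB Require Import structures.
From mathcomp Require Import all_boot all_order all_algebra all_fingroup all_field.
Set Implicit Arguments. Unset Strict Implicit. Unset Printing Implicit Defensive.
Import Order.TTheory GRing.Theory Num.Theory.
Local Open Scope ring_scope.

(* |F| = 2^n, n := logn 2 #|F|; Tr a = \sum_(k<n) a^(2^k), an element of the
   prime field {0,1} of F. *)
Definition ftrace (F : finFieldType) (a : F) : F :=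
  \sum_(k < logn 2 #|F|) a ^+ (2 ^ k).

(* (-1)^(Tr a) as an element of C : Tr a is 0 or 1 in F. *)
Definition sign_tr (F : finFieldType) (C : numClosedFieldType) (a : F) : C :=
  if ftrace a == 0 then 1 else -1.

Definition symplectic_form (F : finFieldType) (S : 'cV[F]_2 -> 'cV[F]_2 -> F) : Prop :=
  [/\ (forall (a : F) u v w, S (a *: u + v) w = a * S u w + S v w),
      (forall (a : F) u v w, S u (a *: v + w) = a * S u v + S u w),
      (forall v, S v v = 0) &
      (exists u v, S u v != 0)].

Definition common_direction (F : finFieldType) (d1 d2 : 'cV[F]_2) : Prop :=
  exists2 d : 'cV[F]_2, d != 0 & exists a b : F, d1 = a *: d /\ d2 = b *: d.

Definition weyl_multiplier (F : finFieldType) (C : numClosedFieldType)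
    (S : 'cV[F]_2 -> 'cV[F]_2 -> F) (m : 'cV[F]_2 -> 'cV[F]_2 -> C) : Prop :=
  [/\ (forall u v, `|m u v| = 1),
      (forall u v w, m (u + v) w * m u v = m u (v + w) * m v w),
      (forall d1 d2, common_direction d1 d2 -> m d1 d2 = 1) &
      (forall u v, (m u v)^* * m v u = sign_tr C (S u v))].

Definition in_SL (F : finFieldType) (G0 : {group {'GL_2[F]}}) : Prop :=
  forall A, A \in G0 -> \det (GLval A) = 1.

Definition G0_invariant (F : finFieldType) (C : numClosedFieldType)
    (G0 : {group {'GL_2[F]}}) (m : 'cV[F]_2 -> 'cV[F]_2 -> C) : Prop :=
  forall A, A \in G0 -> forall u v : 'cV[F]_2,
    m (GLval A *m u) (GLval A *m v) = m u v.

From HB Require Import structures.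
From mathcomp Require Import all_boot all_order all_algebra all_fingroup all_field all_solvable.
From mathcomp Require Import ring zify.
Set Implicit Arguments. Unset Strict Implicit. Unset Printing Implicit Defensive.
Import Order.TTheory GRing.Theory Num.Theory.
Local Open Scope ring_scope.

(* An element A of order 2 in G0, given by Cauchy's theorem, is a transvection
   in characteristic 2: N := A - 1 is a nonzero matrix with N^2 = 0, so x and
   y := N x form a basis, and since squaring is onto in F a rescaling of x
   makes S(x, y) an element of trace 1.  Invariance of m under A reads
   m(x + y, y) = m(x, y); with 2y = 0 the cocycle identity and (M.1) turn this
   into m(x, y)^2 = 1 and m(y, x) = m(x, y), so the left-hand side of (M.2)
   equals 1 while its right-hand side is -1. *)

Lemma exists_ftrace_neq0 (F : finFieldType) :
  2%N \in [pchar F] -> exists z : F, ftrace z != 0.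
Proof.
move=> charF2; have cardF : #|F| = (2 ^ logn 2 #|F|)%N := card_pprimeChar charF2.
rewrite /ftrace; case: (logn 2 #|F|) cardF => [|n] cardF.
  by have := finNzRing_gt1 F; rewrite cardF.
pose Q : {poly F} := \sum_(k < n) 'X^(2 ^ k).
pose P : {poly F} := Q + 'X^(2 ^ n).
have sizeQ : (size Q <= 2 ^ n)%N.
  apply: leq_trans (size_sum _ _ _) _; apply/bigmax_leqP => k _.
  by rewrite size_polyXn ltn_exp2l.
have sizeP : size P = (2 ^ n).+1 by rewrite /P addrC size_polyDl size_polyXn.
have hornerP z : P.[z] = \sum_(k < n.+1) z ^+ (2 ^ k).
  rewrite big_ord_recr /= hornerD horner_sum hornerXn.
  by congr (_ + _); apply: eq_bigr => k _; rewrite hornerXn.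
apply/existsP; apply: contraT; rewrite negb_exists => /forallP rootsP.
have P_neq0 : P != 0 by rewrite -size_poly_gt0 sizeP.
have /max_poly_roots : all (root P) (enum F).
  by apply/allP => z _; rewrite /root hornerP; exact: negbNE.
move=> /(_ P_neq0 (enum_uniq F)); rewrite -cardE cardF sizeP expnS.
by have := expn_gt0 2 n; lia.
Qed.

Lemma exists_sqr_char2 (F : finFieldType) :
  2%N \in [pchar F] -> forall a : F, exists b, b ^+ 2 = a.
Proof.
move=> charF2 a; have inj_sqr : injective (fun b : F => b ^+ 2).
  by move=> b c /=; rewrite -!(pFrobenius_autE charF2) => /fmorph_inj.
by have [g _ gK] := injF_bij inj_sqr; exists (g a); exact: gK.
Qed.

Lemma ord2P (i : 'I_2) : i = 0 \/ i = 1.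
Proof. by case: i => -[|[|//]] lt_i2; [left | right]; apply: val_inj. Qed.

Lemma cV2_decomp (R : pzRingType) (u : 'cV[R]_2) :
  u = u 0 0 *: delta_mx 0 0 + u 1 0 *: delta_mx 1 0.
Proof.
apply/matrixP => i j; rewrite ord1 !mxE.
by have [->|->] := ord2P i; rewrite /= ?mulr1 ?mulr0 ?addr0 ?add0r.
Qed.

Definition wedge2 (R : pzRingType) (u v : 'cV[R]_2) : R := u 0 0 * v 1 0 - u 1 0 * v 0 0.

Lemma wedge2_eq0_scale (R : comPzRingType) (u v : 'cV[R]_2) (i : 'I_2) :
  wedge2 u v = 0 -> u i 0 *: v = v i 0 *: u.
Proof.
move=> /eqP; rewrite subr_eq0 => /eqP uv_vu.
apply/matrixP => k j; rewrite ord1 !mxE.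
have [->|->] := ord2P i; have [->|->] := ord2P k;
  by [rewrite mulrC | rewrite uv_vu mulrC | rewrite -uv_vu mulrC].
Qed.

Lemma wedge2_sqr0_neq0 (F : fieldType) (N : 'M[F]_2) (x : 'cV[F]_2) :
  N *m N = 0 -> N *m x != 0 -> wedge2 x (N *m x) != 0.
Proof.
set y := N *m x => NN y_neq0; apply: contra_neq y_neq0 => wedge0.
have y_scale_y i : y i 0 *: y = 0.
  rewrite {1}/y scalemxAr -(wedge2_eq0_scale i wedge0).
  by rewrite -scalemxAr mulmxA NN mul0mx scaler0.
apply/matrixP => i j; rewrite ord1 mxE.
by have /matrixP/(_ i 0)/eqP := y_scale_y i; rewrite !mxE mulf_eq0 orbb => /eqP.
Qed.

Section SymplecticForm.

Variables (F : finFieldType) (S : 'cV[F]_2 -> 'cV[F]_2 -> F).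
Hypothesis symS : symplectic_form S.

Lemma sympDl u v w : S (u + v) w = S u w + S v w.
Proof. by case: symS => linl _ _ _; have := linl 1 u v w; rewrite scale1r mul1r. Qed.

Lemma sympDr u v w : S u (v + w) = S u v + S u w.
Proof. by case: symS => _ linr _ _; have := linr 1 u v w; rewrite scale1r mul1r. Qed.

Lemma symp0l w : S 0 w = 0.
Proof. by apply: (addrI (S 0 w)); rewrite -sympDl !addr0. Qed.

Lemma symp0r w : S w 0 = 0.
Proof. by apply: (addrI (S w 0)); rewrite -sympDr !addr0. Qed.

Lemma sympZl a u w : S (a *: u) w = a * S u w.
Proof. by case: symS => linl _ _ _; rewrite -[a *: u]addr0 linl symp0l addr0. Qed.

Lemma sympZr a u w : S w (a *: u) = a * S w u.
Proof. by case: symS => _ linr _ _; rewrite -[a *: u]addr0 linr symp0r addr0. Qed.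

Lemma sympN u v : S v u = - S u v.
Proof.
case: symS => _ _ alt _; apply/eqP; rewrite -addr_eq0 addrC.
by have := alt (u + v); rewrite sympDl !sympDr !alt add0r addr0 => ->.
Qed.

Lemma symp_wedge2 u v : S u v = wedge2 u v * S (delta_mx 0 0) (delta_mx 1 0).
Proof.
case: symS => _ _ alt _.
rewrite {1}(cV2_decomp u) {1}(cV2_decomp v) sympDl !sympDr !sympZl !sympZr !alt.
by rewrite (sympN (delta_mx 0 0)) /wedge2; ring.
Qed.

Lemma symp_neq0 u v : (S u v != 0) = (wedge2 u v != 0).
Proof.
have e01_neq0 : S (delta_mx 0 0) (delta_mx 1 0) != 0.
  by case: symS => _ _ _ [u0 [v0]]; rewrite symp_wedge2 mulf_eq0 negb_or => /andP[].
by rewrite symp_wedge2 mulf_eq0 negb_or e01_neq0 andbT.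
Qed.

End SymplecticForm.

Lemma sqr_subr1_involutive (R : pzRingType) (x : R) :
  2%:R = 0 :> R -> x * x = 1 -> (x - 1) * (x - 1) = 0.
Proof.
move=> two0 xx1; rewrite mulrBr mulr1 mulrBl xx1 mul1r opprB.
by rewrite -mulr2n -mulr_natr two0 mulr0.
Qed.

Lemma GL_order2_unipotent (F : finFieldType) n (A : {'GL_n[F]}) :
  2%N \in [pchar F] -> #[A]%g = 2 ->
  (GLval A - 1) * (GLval A - 1) = 0 /\ GLval A != 1.
Proof.
move=> charF2 ordA; split.
  apply: sqr_subr1_involutive; first by rewrite -scaler_nat (pcharf0 charF2) scale0r.
  have := expg_order A; rewrite ordA expgS expg1 => /(congr1 (@GLval _ _)).
  by rewrite GL_ME GL_1E.
apply/eqP => A1; move: ordA; suff -> : A = 1%g by rewrite order1.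
by apply: val_inj; rewrite /= A1 -GL_1E.
Qed.

Lemma exists_mulmx_neq0 (R : pzSemiRingType) m n (A : 'M[R]_(m, n)) :
  A != 0 -> exists v : 'cV_n, A *m v != 0.
Proof.
move=> A_neq0; have /existsP[j Aj] : [exists j, A *m delta_mx j (0 : 'I_1) != 0].
  apply: contraR A_neq0 => /existsPn Acol0; apply/eqP/matrixP => i j.
  by have /negPn/eqP/matrixP/(_ i 0) := Acol0 j; rewrite -colE !mxE.
by exists (delta_mx j 0).
Qed.

Lemma GL2_order2_shear (F : finFieldType) (S : 'cV[F]_2 -> 'cV[F]_2 -> F)
    (A : {'GL_2[F]}) (z : F) :
  2%N \in [pchar F] -> symplectic_form S -> #[A]%g = 2 ->
  exists x y, [/\ GLval A *m x = x + y, GLval A *m y = y & S x y = z].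
Proof.
move=> charF2 symS ordA; have [NN A_neq1] := GL_order2_unipotent charF2 ordA.
set M := GLval A in NN A_neq1 *; rewrite -mulmxE in NN.
have [x0 Nx0_neq0] : exists x0 : 'cV_2, (M - 1) *m x0 != 0.
  by apply: exists_mulmx_neq0; rewrite subr_eq0.
set y0 := (M - 1) *m x0 in Nx0_neq0.
have Sx0y0_neq0 : S x0 y0 != 0 by rewrite symp_neq0 // wedge2_sqr0_neq0.
have [b b2] := exists_sqr_char2 charF2 (z / S x0 y0).
have My0 : M *m y0 = y0.
  by rewrite -[M in M *m _](subrK 1) mulmxDl mul1mx /y0 mulmxA NN mul0mx add0r.
exists (b *: x0), (b *: y0); split.
- by rewrite -scalerDr -scalemxAr /y0 mulmxBl mul1mx addrC subrK.
- by rewrite -scalemxAr My0.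
- by rewrite sympZl // sympZr // mulrA -expr2 b2 mulfVK.
Qed.

Lemma common_direction_scale (F : finFieldType) (v : 'cV[F]_2) (a b : F) :
  common_direction (a *: v) (b *: v).
Proof.
have [->|v_neq0] := eqVneq v 0; last by exists v => //; exists a, b.
exists (delta_mx 0 0); last by exists 0, 0; rewrite !scaler0 !scale0r.
by apply/eqP => /matrixP/(_ 0 0)/eqP; rewrite !mxE oner_eq0.
Qed.

Lemma sign_tr_eq1 (F : finFieldType) (C : numClosedFieldType) (a : F) :
  sign_tr C a = 1 -> ftrace a = 0.
Proof.
rewrite /sign_tr; case: eqP => // _ /eqP.
by rewrite -subr_eq0 -opprD oppr_eq0 -mulr2n pnatr_eq0.
Qed.

Section WeylMultiplier.

Variables (F : finFieldType) (C : numClosedFieldType).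
Variables (S : 'cV[F]_2 -> 'cV[F]_2 -> F) (m : 'cV[F]_2 -> 'cV[F]_2 -> C).
Hypothesis weylm : weyl_multiplier S m.

Lemma weyl_scale v a b : m (a *: v) (b *: v) = 1.
Proof. by case: weylm => _ _ direction1 _; exact/direction1/common_direction_scale. Qed.

Lemma weyl_diag v : m v v = 1.
Proof. by have := weyl_scale v 1 1; rewrite scale1r. Qed.

Lemma weyl0r v : m v 0 = 1.
Proof. by have := weyl_scale v 1 0; rewrite scale1r scale0r. Qed.

Lemma weyl0l v : m 0 v = 1.
Proof. by have := weyl_scale v 0 1; rewrite scale1r scale0r. Qed.

Lemma weyl_shear_ftrace_eq0 x y :
  y + y = 0 -> m (x + y) y = m x y -> ftrace (S x y) = 0.
Proof.
case: weylm => norm1 cocycle _ commutation yy shear; set a := m x y in shear *.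
have a2 : a * a = 1.
  by have := cocycle x y y; rewrite shear yy weyl0r weyl_diag mulr1.
have a_yxy : a = m y (x + y).
  by have := cocycle x y (x + y); rewrite (addrCA y x) yy addr0 !weyl_diag !mul1r.
have ayx : a * m y x = 1.
  by have := cocycle y y x; rewrite yy weyl0l weyl_diag mulr1 addrC -a_yxy.
have conj_a : a^* = a.
  by rewrite -[a^*]mulr1 -a2 mulrA [a^* * a]mulrC -normCK norm1 expr1n mul1r.
have myx : m y x = a by rewrite -[m y x]mul1r -a2 -mulrA ayx mulr1.
by apply: (@sign_tr_eq1 _ C); rewrite -commutation conj_a myx.
Qed.

End WeylMultiplier.

Theorem lemma3p1 (F : finFieldType) (C : numClosedFieldType)
  (G0 : {group {'GL_2[F]}}) :
  (2%N \in [pchar F]) -> in_SL G0 -> ~~ odd #|G0| ->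
  forall S : 'cV[F]_2 -> 'cV[F]_2 -> F, symplectic_form S ->
  ~ (exists m : 'cV[F]_2 -> 'cV[F]_2 -> C, weyl_multiplier S m /\ G0_invariant G0 m).
Proof.
move=> charF2 _ evenG0 S symS [m [weylm invm]].
have /(Cauchy (isT : prime 2))[A AG0 ordA] : (2 %| #|G0|)%N by rewrite dvdn2.
have [z trz] := exists_ftrace_neq0 charF2.
have [x [y [Ax Ay Sxy]]] := GL2_order2_shear z charF2 symS ordA.
apply/negP: trz; rewrite negbK -Sxy; apply/eqP/(weyl_shear_ftrace_eq0 weylm).
  by rewrite -mulr2n -scaler_nat (pcharf0 charF2) scale0r.
by have := invm A AG0 x y; rewrite Ax Ay.
Qed.
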